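(* Let $B$ be a finite skew brace, regarded as a q-cycle set via $a\cdot b:=\lambda_{a^-}(b)$ and $a:b:=\delta_{a^-}(b)$, and let $X$ be an indecomposable sub-q-cycle set of $B$. Then: (1) for $x\in X$, we have $B=B(x)$ if and only if $X$ is a transitive cycle base of $B$ and $\langle x\rangle = X$; (2) $B=B(x)$ for all $x\in X$ if and only if $X$ is a transitive cycle base of $B$ and $X$ is irreducible.
   Context: A skew brace is a triple $(B,+,\circ)$ where $(B,+)$ and $(B,\circ)$ are groups and $a\circ(b+c)=a\circ b-a+a\circ c$ for all $a,b,c\in B$; $-a$ and $a^-$ denote the inverses of $a$ in $(B,+)$ and $(B,\circ)$. For $a\in B$ put $\lambda_a(b):=-a+a\circ b$ and $\delta_a(b):=a\circ b-a$. A sub-skew brace is a subset that is a subgroup of both $(B,+)$ and $(B,\circ)$; $B(x)$ denotes the smallest sub-skew brace of $B$ containing $x$. A q-cycle set is a non-empty set $X$ with binary operations $\cdot$ and $:$ such that each map $\sigma_x:y\mapsto x\cdot y$ is bijective and, for all $x,y,z$: $(x\cdot y)\cdot(x\cdot z)=(y:x)\cdot(y\cdot z)$, $(x:y):(x:z)=(y\cdot x):(y:z)$, $(x\cdot y):(x\cdot z)=(y:x)\cdot(y:z)$. Write $\delta_x(y):=x:y$ (for the skew brace $B$, the q-cycle set maps are $\sigma_a=\lambda_{a^-}$ and $\delta_{a^-}$). A sub-q-cycle set is a subset that is again a q-cycle set under the restricted operations (the empty set also counts as one). For $S\subseteq X$, $\langle S\rangle$ is the intersection of all sub-q-cycle sets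 containing $S$, and $\langle x\rangle:=\langle\{x\}\rangle$. $X$ is irreducible if $\emptyset$ and $X$ are its only sub-q-cycle sets. $X$ is indecomposable if there is no partition of $X$ into two nonempty sub-q-cycle sets (for finite $X$ this is equivalent to the group generated by all $\sigma_x,\delta_x$ acting transitively on $X$). A subset $X\subseteq B$ is a cycle base of $B$ if it is a union of orbits of the subgroup of $\mathrm{Sym}(B)$ generated by $\{\lambda_a,\delta_a : a\in B\}$ and it generates $(B,+)$; it is a transitive cycle base if it is a single such orbit. *)

From mathcomp Require Import all_boot.
Set Implicit Arguments. Unset Strict Implicit. Unset Printing Implicit Defensive.

Record brace_ops (T : finType) := BraceOps {
  badd  : T -> T -> T;
  bopp  : T -> T;
  bzero : T;
  bcirc : T -> T -> T;
  binv  : T -> T;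
  bone  : T
}.

Definition is_group (T : Type) (op : T -> T -> T) (inv : T -> T) (e : T) :=
  [/\ associative op, left_id e op, right_id e op,
      left_inverse e inv op & right_inverse e inv op].

Definition is_skew_brace (T : finType) (B : brace_ops T) :=
  [/\ is_group (badd B) (bopp B) (bzero B),
      is_group (bcirc B) (binv B) (bone B) &
      forall a b c, bcirc B a (badd B b c)
                    = badd B (badd B (bcirc B a b) (bopp B a)) (bcirc B a c)].

Section Brace.
Variables (T : finType) (B : brace_ops T).

Definition blambda (a b : T) : T := badd B (bopp B a) (bcirc B a b).
Definition bdelta (a b : T) : T := badd B (bcirc B a b) (bopp B a).

Definition add_subgroup (S : {set T}) : bool :=
  [&& bzero B \in S,
      [forall a in S, forall b in S, badd B a b \in S] &
      [forall a in S, bopp B a \in S]].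

Definition circ_subgroup (S : {set T}) : bool :=
  [&& bone B \in S,
      [forall a in S, forall b in S, bcirc B a b \in S] &
      [forall a in S, binv B a \in S]].

Definition sub_skew_brace (S : {set T}) : bool :=
  add_subgroup S && circ_subgroup S.

Definition brace_gen (x : T) : {set T} :=
  \bigcap_(S : {set T} | sub_skew_brace S && (x \in S)) S.

Definition add_gen (X : {set T}) : {set T} :=
  \bigcap_(S : {set T} | add_subgroup S && (X \subset S)) S.

(* one step of the action of a generator lambda_a, delta_a (or of its
   inverse) of the subgroup of Sym(B) generated by all lambda_a, delta_a *)
Definition ld_step : rel T := fun x y =>
  [exists a, [|| blambda a x == y, bdelta a x == y,
                 blambda a y == x | bdelta a y == x]].

Definition ld_orbit (x : T) : {set T} := [set y | connect ld_step x y].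

Definition cycle_base (X : {set T}) : Prop :=
  (forall x, x \in X -> ld_orbit x \subset X) /\ add_gen X = setT.

Definition transitive_cycle_base (X : {set T}) : Prop :=
  (exists x, X = ld_orbit x) /\ add_gen X = setT.

Definition bdot (a b : T) : T := blambda (binv B a) b.
Definition bcolon (a b : T) : T := bdelta (binv B a) b.

End Brace.

Section QCycleSet.
Variables (T : finType) (dot colon : T -> T -> T).

(* X (a subset of T) is a q-cycle set under the restricted operations
   (the empty set is allowed, as for sub-q-cycle sets) *)
Definition sub_qcs (X : {set T}) : bool :=
  [&& [forall x in X, forall y in X, (dot x y \in X) && (colon x y \in X)],
      [forall x in X, forall y in X, forall z in X, (dot x y == dot x z) ==> (y == z)],
      [forall x in X, forall y in X, exists z in X, dot x z == y] &
      [forall x in X, forall y in X, forall z in X,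
        [&& dot (dot x y) (dot x z) == dot (colon y x) (dot y z),
            colon (colon x y) (colon x z) == colon (dot y x) (colon y z) &
            colon (dot x y) (dot x z) == dot (colon y x) (colon y z)]]].

Definition qcs_gen (S : {set T}) : {set T} :=
  \bigcap_(Y : {set T} | sub_qcs Y && (S \subset Y)) Y.

(* X (a q-cycle set, hence nonempty) is irreducible: its only
   sub-q-cycle sets are the empty set and X *)
Definition qcs_irreducible (X : {set T}) : Prop :=
  X != set0 /\
  forall Y : {set T}, Y \subset X -> sub_qcs Y -> Y = set0 \/ Y = X.

(* X (a q-cycle set, hence nonempty) is indecomposable: no partition of X
   into two nonempty sub-q-cycle sets *)
Definition qcs_indecomposable (X : {set T}) : Prop :=
  X != set0 /\
  ~ (exists Y Z : {set T},
       [/\ (Y != set0) && (Z != set0), sub_qcs Y, sub_qcs Z,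
           Y :|: Z = X & Y :&: Z = set0]).

End QCycleSet.

From mathcomp Require Import all_boot.
Set Implicit Arguments. Unset Strict Implicit. Unset Printing Implicit Defensive.

(** Let [Y = <x>].  For [y] in [Y], [lambda_(y^-)] and [delta_(y^-)] map the finite
    set [Y] injectively into itself, so [y] lies in the subgroup of [(B, o)] of all
    [a] whose [lambda_a] and [delta_a] preserve [Y].  By [c + y = c o lambda_(c^-)(y)]
    this stabiliser is also closed under adding elements of [Y], hence contains the
    additive subgroup [A] generated by [Y]; then [A] is [lambda_a]-stable for [a] in
    [A], i.e. a sub-skew brace containing [x].  So [B(x) = B] forces [A = B]: [Y] is
    then invariant under all [lambda_a], [delta_a] and contains the orbit of [x],
    while an indecomposable [X] lies in the orbit of each of its elements; thus
    [X = <x>] is a transitive cycle base.  Conversely, the intersection of [B(x)]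
    and [X] is a sub-q-cycle set containing [x], so [<x> = X] lies in [B(x)], and
    [B(x) = B] once [X] generates [(B, +)].  Part (2) follows, since [X] is
    irreducible exactly when [<x> = X] for every [x] in [X]. *)

Section StableSets.
Variables (T : finType) (f : T -> T) (S : {set T}).
Hypothesis f_stable : {in S, forall v, f v \in S}.

Lemma imset_stable_inj : {in S &, injective f} -> f @: S = S.
Proof.
move=> f_inj; apply/eqP; rewrite eqEcard card_in_imset // leqnn andbT.
by apply/subsetP => _ /imsetP[v vS ->]; exact: f_stable.
Qed.

Lemma mem_stable_inj : injective f -> forall v, (f v \in S) = (v \in S).
Proof. by move=> f_inj v; rewrite -{1}(imset_stable_inj (in2W f_inj)) mem_imset. Qed.

End StableSets.

Section QCycleSetClosure.
Variables (T : finType) (dot colon : T -> T -> T).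
Implicit Types (S W X Y O : {set T}).

Definition qcs_closed Y :=
  {in Y &, forall u v, (dot u v \in Y) && (colon u v \in Y)}.

Definition qcs_invariant O :=
  forall u v, (dot u v \in O) = (v \in O) /\ (colon u v \in O) = (v \in O).

Lemma sub_qcs_closed X : sub_qcs dot colon X -> qcs_closed X.
Proof. by case/and4P => /forall_inP clX _ _ _ u v /clX /forall_inP; apply. Qed.

Lemma sub_qcs_subset X W :
  sub_qcs dot colon X -> W \subset X -> qcs_closed W -> sub_qcs dot colon W.
Proof.
move=> sqX /subsetP WX clW.
case/and4P: sqX => _ /forall_inP injX _ /forall_inP eqnX.
apply/and4P; split.
- by apply/forall_inP => u uW; apply/forall_inP => v vW; exact: clW.
- apply/forall_inP => u uW; apply/forall_inP => v vW; apply/forall_inP => w wW.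
  by move/forall_inP: (injX u (WX u uW)) => /(_ v (WX v vW)) /forall_inP; apply; exact: WX.
- apply/forall_inP => u uW; apply/forall_inP => v vW.
  have dot_inj : {in W &, injective (dot u)}.
    move=> a b aW bW /eqP; move/forall_inP: (injX u (WX u uW)) => /(_ a (WX a aW)).
    by move=> /forall_inP /(_ b (WX b bW)) /implyP dot_ab /dot_ab /eqP.
  have dot_stable : {in W, forall a, dot u a \in W}.
    by move=> a aW; case/andP: (clW u a uW aW).
  have : v \in dot u @: W by rewrite (imset_stable_inj dot_stable dot_inj).
  by case/imsetP => a aW ->; apply/exists_inP; exists a.
- apply/forall_inP => u uW; apply/forall_inP => v vW; apply/forall_inP => w wW.
  by move/forall_inP: (eqnX u (WX u uW)) => /(_ v (WX v vW)) /forall_inP; apply; exact: WX.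
Qed.

Lemma qcs_closedI X Y : qcs_closed X -> qcs_closed Y -> qcs_closed (X :&: Y).
Proof.
move=> clX clY u v; rewrite !inE => /andP[uX uY] /andP[vX vY].
by case/andP: (clX u v uX vX) => -> ->; case/andP: (clY u v uY vY) => -> ->.
Qed.

Lemma qcs_closed_bigcap (P : pred {set T}) :
  (forall Y, P Y -> qcs_closed Y) -> qcs_closed (\bigcap_(Y | P Y) Y).
Proof.
move=> clP u v /bigcapP uP /bigcapP vP.
by apply/andP; split; apply/bigcapP => Y PY; case/andP: (clP Y PY u v (uP Y PY) (vP Y PY)).
Qed.

Lemma qcs_gen_min S X : sub_qcs dot colon X -> S \subset X -> qcs_gen dot colon S \subset X.
Proof. by move=> sqX SX; apply: bigcap_inf; rewrite sqX SX. Qed.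

Lemma qcs_gen_sub S : S \subset qcs_gen dot colon S.
Proof. by apply/bigcapsP => Y /andP[]. Qed.

Lemma qcs_closed_gen S : qcs_closed (qcs_gen dot colon S).
Proof. by apply: qcs_closed_bigcap => Y /andP[/sub_qcs_closed]. Qed.

Lemma qcs_invariantC O : qcs_invariant O -> qcs_invariant (~: O).
Proof. by move=> invO u v; rewrite !inE; case: (invO u v) => -> ->. Qed.

Lemma qcs_closed_invariant O : qcs_invariant O -> qcs_closed O.
Proof. by move=> invO u v _ vO; case: (invO u v) => -> ->; rewrite vO. Qed.

Lemma qcs_indecomposable_sub X O x :
  sub_qcs dot colon X -> qcs_indecomposable dot colon X -> qcs_invariant O ->
  x \in X -> x \in O -> X \subset O.
Proof.
move=> sqX [_ indX] invO xX xO; apply/subsetP => y yX; apply: contraT => yNO.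
have closed_part Z : qcs_invariant Z -> sub_qcs dot colon (X :&: Z).
  move=> invZ; apply: (sub_qcs_subset sqX (subsetIl _ _)).
  exact: qcs_closedI (sub_qcs_closed sqX) (qcs_closed_invariant invZ).
exfalso; apply: indX; exists (X :&: O), (X :\: O); split.
- by apply/andP; split; apply/set0Pn; [exists x | exists y]; rewrite !inE ?xX ?xO ?yX ?yNO.
- exact: closed_part.
- by rewrite setDE; apply/closed_part/qcs_invariantC.
- exact: setID.
- by apply/setP => w; rewrite !inE; case: (w \in O); rewrite ?andbF.
Qed.

Lemma qcs_irreducible_gen1 X :
  sub_qcs dot colon X -> X != set0 ->
  qcs_irreducible dot colon X <-> {in X, forall x, qcs_gen dot colon [set x] = X}.
Proof.
move=> sqX X0; split=> [[_ irrX] x xX | genX].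
  have YX : qcs_gen dot colon [set x] \subset X by rewrite qcs_gen_min ?sub1set.
  have [Y0 | //] := irrX _ YX (sub_qcs_subset sqX YX (@qcs_closed_gen [set x])).
  by move: (qcs_gen_sub [set x]); rewrite Y0 sub1set inE.
split=> // W WX sqW; have [-> | [w wW]] := set_0Vmem W; [by left | right].
by apply/eqP; rewrite eqEsubset WX -(genX w (subsetP WX w wW)) qcs_gen_min ?sub1set.
Qed.

End QCycleSetClosure.

Section GroupLaws.
Variables (G : Type) (op : G -> G -> G) (inv : G -> G) (e : G).
Hypothesis grp : is_group op inv e.

Let opA : associative op. Proof. by case: grp. Qed.
Let op1g : left_id e op. Proof. by case: grp. Qed.
Let opg1 : right_id e op. Proof. by case: grp. Qed.
Let opVg : left_inverse e inv op. Proof. by case: grp. Qed.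
Let opgV : right_inverse e inv op. Proof. by case: grp. Qed.

Lemma group_mulKg a b : op (inv a) (op a b) = b.
Proof. by rewrite opA opVg op1g. Qed.

Lemma group_mulKVg a b : op a (op (inv a) b) = b.
Proof. by rewrite opA opgV op1g. Qed.

Lemma group_mulgK a b : op (op b a) (inv a) = b.
Proof. by rewrite -opA opgV opg1. Qed.

Lemma group_mulgKV a b : op (op b (inv a)) a = b.
Proof. by rewrite -opA opVg opg1. Qed.

Lemma group_mulgI a : injective (op a).
Proof. by move=> b c eq_ab; rewrite -(group_mulKg a b) eq_ab group_mulKg. Qed.

Lemma group_mulIg a : injective (op^~ a).
Proof. by move=> b c /= eq_ba; rewrite -(group_mulgK a b) eq_ba group_mulgK. Qed.

Lemma group_invK a : inv (inv a) = a.
Proof. by apply: (@group_mulgI (inv a)); rewrite opgV opVg. Qed.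

Lemma group_inv1 : inv e = e.
Proof. by rewrite -[inv e]op1g opgV. Qed.

Lemma group_invM a b : inv (op a b) = op (inv b) (inv a).
Proof. by apply: (@group_mulgI (op a b)); rewrite opgV opA group_mulgK opgV. Qed.

End GroupLaws.

Section SkewBrace.
Variables (T : finType) (B : brace_ops T).
Implicit Types (S X Y : {set T}).

Local Notation add := (badd B).
Local Notation opp := (bopp B).
Local Notation z := (bzero B).
Local Notation circ := (bcirc B).
Local Notation inv := (binv B).
Local Notation one := (bone B).
Local Notation lam := (blambda B).
Local Notation del := (bdelta B).
Local Notation dot := (bdot B).
Local Notation colon := (bcolon B).

Lemma add_subgroupP S :
  reflect [/\ z \in S, {in S &, forall a b, add a b \in S} & {in S, forall a, opp a \in S}]
          (add_subgroup B S).
Proof.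
apply: (iffP and3P) => [[S0 /forall_inP SD /forall_inP SN] | [S0 SD SN]].
  by split=> // a b /SD /forall_inP; apply.
by split=> //; apply/forall_inP => a aS; [apply/forall_inP => b; exact: SD | exact: SN].
Qed.

Lemma circ_subgroupP S :
  reflect [/\ one \in S, {in S &, forall a b, circ a b \in S} & {in S, forall a, inv a \in S}]
          (circ_subgroup B S).
Proof.
apply: (iffP and3P) => [[S1 /forall_inP SM /forall_inP SV] | [S1 SM SV]].
  by split=> // a b /SM /forall_inP; apply.
by split=> //; apply/forall_inP => a aS; [apply/forall_inP => b; exact: SM | exact: SV].
Qed.

Lemma add_subgroup_bigcap (P : pred {set T}) :
  (forall S, P S -> add_subgroup B S) -> add_subgroup B (\bigcap_(S | P S) S).
Proof.
move=> sgP; apply/add_subgroupP; split.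
- by apply/bigcapP => S /sgP /add_subgroupP[].
- move=> a b /bigcapP aP /bigcapP bP; apply/bigcapP => S PS.
  by case/add_subgroupP: (sgP S PS) => _ SD _; apply: SD; [exact: aP | exact: bP].
- move=> a /bigcapP aP; apply/bigcapP => S PS.
  by case/add_subgroupP: (sgP S PS) => _ _ SN; apply: SN; exact: aP.
Qed.

Lemma circ_subgroup_bigcap (P : pred {set T}) :
  (forall S, P S -> circ_subgroup B S) -> circ_subgroup B (\bigcap_(S | P S) S).
Proof.
move=> sgP; apply/circ_subgroupP; split.
- by apply/bigcapP => S /sgP /circ_subgroupP[].
- move=> a b /bigcapP aP /bigcapP bP; apply/bigcapP => S PS.
  by case/circ_subgroupP: (sgP S PS) => _ SM _; apply: SM; [exact: aP | exact: bP].
- move=> a /bigcapP aP; apply/bigcapP => S PS.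
  by case/circ_subgroupP: (sgP S PS) => _ _ SV; apply: SV; exact: aP.
Qed.

Lemma add_gen_min S X : add_subgroup B S -> X \subset S -> add_gen B X \subset S.
Proof. by move=> sgS XS; apply: bigcap_inf; rewrite sgS XS. Qed.

Lemma add_gen_sub X : X \subset add_gen B X.
Proof. by apply/bigcapsP => S /andP[]. Qed.

Lemma add_subgroup_gen X : add_subgroup B (add_gen B X).
Proof. by apply: add_subgroup_bigcap => S /andP[]. Qed.

Lemma brace_gen_min S x : sub_skew_brace B S -> x \in S -> brace_gen B x \subset S.
Proof. by move=> sbS xS; apply: bigcap_inf; rewrite sbS xS. Qed.

Lemma mem_brace_gen x : x \in brace_gen B x.
Proof. by apply/bigcapP => S /andP[]. Qed.

Lemma sub_skew_brace_gen x : sub_skew_brace B (brace_gen B x).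
Proof.
apply/andP; split.
  by apply: add_subgroup_bigcap => S /andP[/andP[]].
by apply: circ_subgroup_bigcap => S /andP[/andP[]].
Qed.

Lemma qcs_closed_sub_skew_brace S : sub_skew_brace B S -> qcs_closed dot colon S.
Proof.
case/andP => /add_subgroupP[_ SD SN] /circ_subgroupP[_ SM SV] u v uS vS.
have uVS := SV u uS.
by apply/andP; split; apply: SD; rewrite ?SN ?SM.
Qed.

Lemma qcs_gen1_sub_brace_gen X x :
  sub_qcs dot colon X -> x \in X -> qcs_gen dot colon [set x] \subset brace_gen B x.
Proof.
move=> sqX xX; apply: subset_trans (subsetIl (brace_gen B x) X); apply: qcs_gen_min.
  apply: (sub_qcs_subset sqX (subsetIr _ _)); apply: qcs_closedI (sub_qcs_closed sqX).
  exact/qcs_closed_sub_skew_brace/sub_skew_brace_gen.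
by rewrite sub1set inE mem_brace_gen xX.
Qed.

Lemma ld_step_sym : symmetric (ld_step B).
Proof.
move=> u v; apply/existsP/existsP => -[a uv]; exists a;
  by case/or4P: uv => ->; rewrite ?orbT.
Qed.

Lemma qcs_invariant_ld_orbit x : qcs_invariant dot colon (ld_orbit B x).
Proof.
have cl := connect_closed (sym_connect_sym ld_step_sym) x.
move=> u v; rewrite !inE; split; symmetry; apply: cl;
  by apply/existsP; exists (inv u); rewrite eqxx ?orbT.
Qed.

Hypothesis HB : is_skew_brace B.

Let addG : is_group add opp z. Proof. by case: HB. Qed.
Let circG : is_group circ inv one. Proof. by case: HB. Qed.

Let addA : associative add. Proof. by case: addG. Qed.
Let add0r : left_id z add. Proof. by case: addG. Qed.
Let addr0 : right_id z add. Proof. by case: addG. Qed.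
Let addNr : left_inverse z opp add. Proof. by case: addG. Qed.
Let addrN : right_inverse z opp add. Proof. by case: addG. Qed.
Let circA : associative circ. Proof. by case: circG. Qed.
Let circ1r : left_id one circ. Proof. by case: circG. Qed.
Let circVr : left_inverse one inv circ. Proof. by case: circG. Qed.
Let circrV : right_inverse one inv circ. Proof. by case: circG. Qed.
Let circD a b c : circ a (add b c) = add (add (circ a b) (opp a)) (circ a c).
Proof. by case: HB. Qed.

Local Notation addKr := (group_mulKg addG).
Local Notation addNKr := (group_mulKVg addG).
Local Notation addrK := (group_mulgK addG).
Local Notation addrNK := (group_mulgKV addG).
Local Notation oppK := (group_invK addG).
Local Notation oppD := (group_invM addG).
Local Notation opp0 := (group_inv1 addG).

Lemma circ0 a : circ a z = a.
Proof.
have := circD a z z; rewrite addr0 -addA -{1}[circ a z]addr0.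
by move=> /(group_mulgI addG) /esym /(congr1 (add a)); rewrite addNKr addr0.
Qed.

Lemma one_zero : one = z.
Proof. by rewrite -(circ0 one) circ1r. Qed.

Lemma circN a v : circ a (opp v) = add (add a (opp (circ a v))) a.
Proof.
have := circD a v (opp v); rewrite addrN circ0.
by move=> /(congr1 (add (opp (add (circ a v) (opp a))))); rewrite addKr oppD oppK => <-.
Qed.

Lemma lamD a u v : lam a (add u v) = add (lam a u) (lam a v).
Proof. by rewrite /blambda circD !addA. Qed.

Lemma lam0 a : lam a z = z.
Proof. by rewrite /blambda circ0 addNr. Qed.

Lemma lamN a u : lam a (opp u) = opp (lam a u).
Proof. by rewrite /blambda circN oppD oppK !addA addNr add0r. Qed.

Lemma lamM a b c : lam (circ a b) c = lam a (lam b c).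
Proof. by rewrite /blambda circD circN circA !addA addNr add0r addrK. Qed.

Lemma delM a b c : del (circ a b) c = del a (del b c).
Proof. by rewrite /bdelta circD circN circA !addA addrK addrNK. Qed.

Lemma lam1 b : lam one b = b.
Proof. by rewrite /blambda circ1r one_zero opp0 add0r. Qed.

Lemma del1 b : del one b = b.
Proof. by rewrite /bdelta circ1r one_zero opp0 addr0. Qed.

Lemma lamK a : cancel (lam (inv a)) (lam a).
Proof. by move=> b; rewrite -lamM circrV lam1. Qed.

Lemma lamKV a : cancel (lam a) (lam (inv a)).
Proof. by move=> b; rewrite -lamM circVr lam1. Qed.

Lemma delK a : cancel (del (inv a)) (del a).
Proof. by move=> b; rewrite -delM circrV del1. Qed.

Lemma delKV a : cancel (del a) (del (inv a)).
Proof. by move=> b; rewrite -delM circVr del1. Qed.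

Lemma circE a b : circ a b = add a (lam a b).
Proof. by rewrite /blambda addNKr. Qed.

Lemma addE a b : add a b = circ a (lam (inv a) b).
Proof. by rewrite circE lamK. Qed.

Lemma invE a : inv a = lam (inv a) (opp a).
Proof. by rewrite lamN /blambda circVr one_zero addr0 oppK. Qed.

Definition ld_stab Y : {set T} :=
  [set c | [forall v, (lam c v \in Y) == (v \in Y)] &&
           [forall v, (del c v \in Y) == (v \in Y)]].

Lemma ld_stabP Y c :
  reflect ((forall v, (lam c v \in Y) = (v \in Y)) /\ (forall v, (del c v \in Y) = (v \in Y)))
          (c \in ld_stab Y).
Proof.
rewrite inE; apply: (iffP andP) => [[/forallP lamY /forallP delY] | [lamY delY]].
  by split=> v; apply/eqP; [exact: lamY | exact: delY].
by split; apply/forallP => v; apply/eqP; [exact: lamY | exact: delY].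
Qed.

Lemma ld_stab1 Y : one \in ld_stab Y.
Proof. by apply/ld_stabP; split=> v; rewrite ?lam1 ?del1. Qed.

Lemma ld_stabM Y c d :
  c \in ld_stab Y -> d \in ld_stab Y -> circ c d \in ld_stab Y.
Proof.
move=> /ld_stabP[lamcY delcY] /ld_stabP[lamdY deldY].
by apply/ld_stabP; split=> v; rewrite ?lamM ?delM ?lamcY ?lamdY ?delcY ?deldY.
Qed.

Lemma ld_stabV Y c : c \in ld_stab Y -> inv c \in ld_stab Y.
Proof.
move=> /ld_stabP[lamY delY]; apply/ld_stabP.
by split=> v; [rewrite -lamY lamK | rewrite -delY delK].
Qed.

Lemma qcs_closed_sub_ld_stab Y : qcs_closed dot colon Y -> Y \subset ld_stab Y.
Proof.
move=> clY; apply/subsetP => y yY; rewrite -[y](group_invK circG); apply: ld_stabV.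
apply/ld_stabP; split; apply: mem_stable_inj.
- by move=> v vY; case/andP: (clY y v yY vY).
- exact: can_inj (lamKV _).
- by move=> v vY; case/andP: (clY y v yY vY).
- exact: can_inj (delKV _).
Qed.

Lemma add_gen_sub_ld_stab Y :
  qcs_closed dot colon Y -> add_gen B Y \subset ld_stab Y.
Proof.
move=> clY; have YC := subsetP (qcs_closed_sub_ld_stab clY).
pose G := [set g | [forall c in ld_stab Y, add c g \in ld_stab Y]].
have sgG : add_subgroup B G.
  apply/add_subgroupP; split.
  - by rewrite inE; apply/forall_inP => c; rewrite addr0.
  - move=> a b; rewrite !inE => /forall_inP aG /forall_inP bG.
    by apply/forall_inP => c cC; rewrite addA; apply/bG/aG.
  - move=> g; rewrite !inE => /forall_inP gG; apply/forall_inP => c cC.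
    by rewrite -(mem_stable_inj gG (group_mulIg (a := g) addG)) addrNK.
have YG : Y \subset G.
  apply/subsetP => y yY; rewrite inE; apply/forall_inP => c cC.
  rewrite addE ld_stabM // YC // (ld_stabP _ _ (ld_stabV cC)).1 //.
apply/subsetP => a /(subsetP (add_gen_min sgG YG)).
by rewrite inE => /forall_inP /(_ _ (ld_stab1 Y)); rewrite one_zero add0r.
Qed.

Lemma lam_add_gen Y c :
  {in Y, forall v, lam c v \in Y} -> {in add_gen B Y, forall v, lam c v \in add_gen B Y}.
Proof.
move=> lamY; have [A0 AD AN] := add_subgroupP _ (add_subgroup_gen Y).
suff: add_gen B Y \subset lam c @^-1: add_gen B Y by move/subsetP => sub v /sub; rewrite inE.
apply: add_gen_min; last first.
  by apply/subsetP => v vY; rewrite inE (subsetP (add_gen_sub Y)) ?lamY.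
apply/add_subgroupP; split=> [|a b|a]; rewrite !inE ?lam0 ?lamD ?lamN //.
  exact: AD.
exact: AN.
Qed.

Lemma sub_skew_brace_add_gen Y :
  qcs_closed dot colon Y -> sub_skew_brace B (add_gen B Y).
Proof.
move=> clY; have AC := subsetP (add_gen_sub_ld_stab clY).
have sgA := add_subgroup_gen Y; have [A0 AD AN] := add_subgroupP _ sgA.
have lamA c : c \in add_gen B Y -> {in add_gen B Y, forall v, lam c v \in add_gen B Y}.
  by move=> /AC /ld_stabP[lamY _]; apply: lam_add_gen => v; rewrite lamY.
rewrite /sub_skew_brace sgA; apply/circ_subgroupP; split.
- by rewrite one_zero.
- by move=> a b aA bA; rewrite circE AD ?lamA.
- move=> a aA; rewrite invE; apply: lam_add_gen (AN _ aA) => v.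
  by case/ld_stabP: (ld_stabV (AC a aA)) => ->.
Qed.

Lemma ld_orbit_sub Y x :
  ld_stab Y = setT -> x \in Y -> ld_orbit B x \subset Y.
Proof.
move=> CT xY; apply/subsetP => y; rewrite inE => /closed_connect <- //.
move=> u v /existsP[c]; have /ld_stabP[lamY delY] : c \in ld_stab Y by rewrite CT inE.
by case/or4P => /eqP <-; rewrite ?lamY ?delY.
Qed.

Lemma sub_ld_orbit X x :
  sub_qcs dot colon X -> qcs_indecomposable dot colon X -> x \in X -> X \subset ld_orbit B x.
Proof.
move=> sqX indX xX; apply: qcs_indecomposable_sub sqX indX (qcs_invariant_ld_orbit x) xX _.
by rewrite inE connect0.
Qed.

Lemma brace_gen_eqT X x :
  sub_qcs dot colon X -> qcs_indecomposable dot colon X -> x \in X ->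
  brace_gen B x = setT <-> transitive_cycle_base B X /\ qcs_gen dot colon [set x] = X.
Proof.
move=> sqX indX xX; set Y := qcs_gen dot colon [set x].
have YX : Y \subset X by apply: qcs_gen_min; rewrite ?sub1set.
have xY : x \in Y by rewrite -sub1set qcs_gen_sub.
have clY : qcs_closed dot colon Y by exact: qcs_closed_gen.
have XO := sub_ld_orbit sqX indX xX.
split=> [BxT | [[_ genX] YeX]].
- have genY : add_gen B Y = setT.
    apply/eqP; rewrite eqEsubset subsetT -BxT brace_gen_min ?sub_skew_brace_add_gen //.
    exact: (subsetP (add_gen_sub Y)).
  have OY : ld_orbit B x \subset Y.
    apply: ld_orbit_sub xY; apply/eqP; rewrite eqEsubset subsetT -genY.
    exact: add_gen_sub_ld_stab.
  have YeX : Y = X by apply/eqP; rewrite eqEsubset YX (subset_trans XO OY).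
  split=> //; split; last by rewrite -YeX.
  by exists x; apply/eqP; rewrite eqEsubset XO -YeX OY.
- apply/eqP; rewrite eqEsubset subsetT -genX -YeX /=.
  apply: add_gen_min; last exact: qcs_gen1_sub_brace_gen sqX xX.
  by case/andP: (sub_skew_brace_gen x).
Qed.

End SkewBrace.

Theorem mainTheorem1 (T : finType) (B : brace_ops T)
  (HB : is_skew_brace B) (X : {set T})
  (HX : sub_qcs (bdot B) (bcolon B) X)
  (Hind : qcs_indecomposable (bdot B) (bcolon B) X) :
  (forall x, x \in X ->
     (brace_gen B x = setT <->
      transitive_cycle_base B X /\ qcs_gen (bdot B) (bcolon B) [set x] = X))
  /\
  ((forall x, x \in X -> brace_gen B x = setT) <->
   transitive_cycle_base B X /\ qcs_irreducible (bdot B) (bcolon B) X).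
Proof.
have part1 x := brace_gen_eqT HB HX Hind (x := x).
have X0 := Hind.1.
split=> //; split=> [allT | [tcbX irrX] x xX].
- have /set0Pn[x0 x0X] := X0.
  split; first exact: ((part1 x0 x0X).1 (allT x0 x0X)).1.
  by apply/qcs_irreducible_gen1 => // x xX; case: ((part1 x xX).1 (allT x xX)).
- apply/(part1 x xX); split=> //.
  by move/(qcs_irreducible_gen1 HX X0): irrX; apply.
Qed.
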